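(* Let $f \in \mathbb{Z}[x]$ be a tower-stable polynomial and let $b$ be an $f$-valid positive integer. Then $\lambda_f(b^{n+1})$ divides $b^n$ for every sufficiently large positive integer $n$.
   Context: For a positive integer $m$, $f_m:\mathbb{Z}/m\mathbb{Z}\to\mathbb{Z}/m\mathbb{Z}$ is the reduction of $f$, and $\lambda_f(m)$ is its period: the least common multiple over $y\in\mathbb{Z}/m\mathbb{Z}$ of the cycle length of $y$ (the least $l\ge1$ with $f_m^k(y)=f_m^{k+l}(y)$ for some $k\ge0$). $f$ is tower-stable if for every prime $p$, $f_p$ is not a cyclic permutation of $\mathbb{Z}/p\mathbb{Z}$ of length $p$. A positive integer $b$ is valid if for all primes $p,q$ with $p\mid b$ and $q\mid p-1$ we have $q\mid b$; $b$ is $f$-valid if $b$ is square-free, valid, and for all primes $p,q$ with $p\mid b$ and $q\mid\lambda_f(p)$ we have $q\mid b$. *)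

From HB Require Import structures.
From mathcomp Require Import all_boot all_order all_algebra.
From mathcomp Require Import boolp.
Set Implicit Arguments. Unset Strict Implicit. Unset Printing Implicit Defensive.
Import GRing.Theory Num.Theory.

Section Dyn.
Variables (T : finType) (h : T -> T).

Definition is_eperiod (y : T) (l : nat) : Prop :=
  0 < l /\ exists k, iter k h y = iter (k + l) h y.

Lemma eperiod_exists (y : T) : exists l, `[< is_eperiod y l >].
Proof.
pose F := fun i : 'I_#|T|.+1 => iter i h y.
have : ~~ injectiveb F.
  apply/negP => /injectiveP inj.
  by move: (leq_card F inj); rewrite card_ord ltnn.
case/injectivePn => i [j] neq Fij.
have neq' : (i : nat) != j.
  apply: contra neq => /eqP e; apply/eqP; exact: val_inj.
clear neq.
have Fij' : iter i h y = iter j h y := Fij.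
clear Fij.
move: (i : nat) (j : nat) Fij' neq' => {i j F} i j Fij neq.
wlog lt_ij : i j neq Fij / i < j.
  move=> W; case: (ltngtP i j) => [lt|lt|e].
  - exact: (W i j).
  - by apply: (W j i); rewrite // eq_sym.
  - by move: neq; rewrite e eqxx.
exists (j - i); apply/asboolP; split; first by rewrite subn_gt0.
exists i; rewrite subnKC; first exact: Fij.
exact: ltnW.
Qed.

Definition cycle_len (y : T) : nat := ex_minn (eperiod_exists y).

End Dyn.

(* reduction f_m : Z/mZ -> Z/mZ of f, with Z/mZ represented by 'I_m *)
Definition red_map (f : {poly int}) (m : nat) (y : 'I_m) : 'I_m :=
  Ordinal (ltn_pmod `|(intdiv.modz (f.[Posz (nat_of_ord y)]) (Posz m))|%N
                    (leq_ltn_trans (leq0n y) (ltn_ord y))).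
Arguments red_map f m y : clear implicits.

Definition lambda_f (f : {poly int}) (m : nat) : nat :=
  \big[lcmn/1%N]_(y : 'I_m) cycle_len (red_map f m) y.

Definition full_cyclic_perm (T : finType) (h : T -> T) : Prop :=
  bijective h /\ forall x y : T, exists k, iter k h x = y.

Definition tower_stable (f : {poly int}) : Prop :=
  forall p : nat, prime p -> ~ full_cyclic_perm (red_map f p).

Definition squarefree (b : nat) : Prop :=
  forall p : nat, prime p -> ~~ (p ^ 2 %| b).

Definition valid (b : nat) : Prop :=
  forall p q : nat, prime p -> prime q -> p %| b -> q %| p.-1 -> q %| b.

Definition f_valid (f : {poly int}) (b : nat) : Prop :=
  squarefree b /\ valid b /\
  forall p q : nat, prime p -> prime q -> p %| b -> q %| lambda_f f p -> q %| b.

From mathcomp Require Import all_boot all_algebra.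
From mathcomp Require Import boolp cyclic.
From mathcomp Require Import ring zify.

(* Fix y modulo b^(n+1). By the Chinese remainder theorem (b is square-free)
   it suffices to find, for every prime p | b, an eventual period of the
   orbit of y modulo p^(n+1) dividing b^n. Modulo p the orbit has cycle length
   L < p (tower stability), so x := f^k(y) satisfies x = G(x) mod p for
   G := f^L, and G is p-adically linear near x with slope a := G'(x).
   If p | a, G contracts and L is already a period modulo p^(n+1); otherwise
   H := G^(p-1) has slope 1 mod p by Fermat, and each p-th power of H gains a
   factor p, so p^n (p-1) L is a period. All prime factors of (p-1) L divide
   b (validity of b), which makes p^n (p-1) L divide b^n once n >= b^2. *)

Import GRing.Theory.

Section PolynomialCongruences.
Local Open Scope ring_scope.

Lemma dvdz_horner_sub (f : {poly int}) (a b : int) : (a - b %| f.[a] - f.[b])%Z.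
Proof.
elim/poly_ind: f => [|f c IH]; first by rewrite !horner0 subr0 dvdz0.
rewrite !hornerMXaddC.
have -> : f.[a] * a + c - (f.[b] * b + c) = (f.[a] - f.[b]) * a + f.[b] * (a - b).
  by ring.
exact: rpredD (dvdz_mulr _ IH) (dvdz_mull _ (dvdzz _)).
Qed.

Lemma horner_congr (f : {poly int}) {d a b : int} :
  (d %| a - b)%Z -> (d %| f.[a] - f.[b])%Z.
Proof. by move/dvdz_trans; apply; apply: dvdz_horner_sub. Qed.

Lemma dvdz_horner_taylor (f : {poly int}) (z e : int) :
  (e * e %| f.[z + e] - f.[z] - f^`().[z] * e)%Z.
Proof.
elim/poly_ind: f => [|f c IH].
  by rewrite deriv0 !horner0 !subr0 mul0r subr0 dvdz0.
rewrite derivMXaddC !hornerMXaddC hornerD hornerM hornerX.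
have -> : f.[z + e] * (z + e) + c - (f.[z] * z + c) - (f.[z] + f^`().[z] * z) * e
    = (f.[z + e] - f.[z] - f^`().[z] * e) * z + (f.[z + e] - f.[z]) * e by ring.
have De := dvdz_horner_sub f (z + e) z; rewrite addrAC subrr add0r in De.
exact: rpredD (dvdz_mulr _ IH) (dvdz_mul De (dvdzz e)).
Qed.

Lemma iter_horner (f : {poly int}) (n : nat) :
  exists g : {poly int}, iter n (horner f) = horner g.
Proof.
elim: n => [|n [g Eg]]; first by exists 'X; apply: funext => z; rewrite hornerX.
by exists (f \Po g); apply: funext => z; rewrite horner_comp /= Eg.
Qed.

End PolynomialCongruences.

Section LocallyLinear.
Local Open Scope ring_scope.

(* A p-adic first-order Taylor condition: [c] plays the role of F'(x). *)
Definition locally_linear (p : int) (F : int -> int) (c x : int) : Prop :=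
  forall z e, (p %| z - x)%Z -> (p %| e)%Z -> (p * e %| F (z + e) - F z - c * e)%Z.

Context {p : int}.

Lemma horner_locally_linear (f : {poly int}) (x : int) :
  locally_linear p (horner f) f^`().[x] x.
Proof.
move=> z e zx pe.
have -> : f.[z + e] - f.[z] - f^`().[x] * e =
    (f.[z + e] - f.[z] - f^`().[z] * e) + (f^`().[z] - f^`().[x]) * e by ring.
apply: rpredD; first exact: dvdz_trans (dvdz_mul pe (dvdzz e)) (dvdz_horner_taylor _ _ _).
exact: dvdz_mul (horner_congr _ zx) (dvdzz e).
Qed.

Lemma locally_linear_congr {F c x z} :
  locally_linear p F c x -> (p %| z - x)%Z -> (p %| F z - F x)%Z.
Proof.
move=> Fx zx; have := Fx x (z - x); rewrite subrr dvdz0 [x + _]addrC subrK => /(_ isT zx).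
move/(dvdz_trans (dvdz_mulr _ (dvdzz p))) => D.
by rewrite -(subrK (c * (z - x)) (F z - F x)) rpredD ?dvdz_mull.
Qed.

Lemma locally_linear_recenter {F c x x'} :
  locally_linear p F c x -> (p %| x' - x)%Z -> locally_linear p F c x'.
Proof.
move=> Fx x'x z e zx' pe; apply: Fx pe.
by rewrite -(subrKA x') rpredD.
Qed.

Lemma locally_linear_slope {F c c' x} :
  locally_linear p F c x -> (p %| c - c')%Z -> locally_linear p F c' x.
Proof.
move=> Fx cc' z e zx pe.
have -> : F (z + e) - F z - c' * e = (F (z + e) - F z - c * e) + (c - c') * e by ring.
by rewrite rpredD ?Fx // dvdz_mul.
Qed.

Lemma locally_linear_comp {F G c d x} :
  locally_linear p F c x -> locally_linear p G d (F x) ->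
  locally_linear p (G \o F) (d * c) x.
Proof.
move=> Fx GFx z e zx pe /=.
set e' := F (z + e) - F z.
have Fe : (p * e %| e' - c * e)%Z by apply: Fx.
have ee' : (e %| e')%Z.
  rewrite -(subrK (c * e) e') rpredD ?dvdz_mull //.
  exact: dvdz_trans (dvdz_mull _ (dvdzz e)) Fe.
have Ge := GFx (F z) e' (locally_linear_congr Fx zx) (dvdz_trans pe ee').
have -> : F (z + e) = F z + e' by rewrite /e'; ring.
have -> : G (F z + e') - G (F z) - d * c * e =
    (G (F z + e') - G (F z) - d * e') + d * (e' - c * e) by ring.
by rewrite rpredD ?dvdz_mull //; apply: dvdz_trans Ge; apply: dvdz_mul.
Qed.

Lemma locally_linear_iter_fix {H c x} i :
  locally_linear p H c x -> (p %| H x - x)%Z -> (p %| iter i H x - x)%Z.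
Proof.
move=> Hx Hxx; elim: i => [|i IH]; first by rewrite subrr dvdz0.
by rewrite iterS -(subrKA (H x)) rpredD // (locally_linear_congr Hx).
Qed.

Lemma locally_linear_iter {H c x} i :
  locally_linear p H c x -> (p %| H x - x)%Z -> locally_linear p (iter i H) (c ^+ i) x.
Proof.
move=> Hx Hxx; elim: i => [|i IH].
  by move=> z e _ _; rewrite /= expr0 mul1r addrAC addrK subrr dvdz0.
rewrite exprS; apply: (locally_linear_comp IH).
exact: locally_linear_recenter Hx (locally_linear_iter_fix i Hx Hxx).
Qed.

End LocallyLinear.

Section PadicLifting.
Local Open Scope ring_scope.

Lemma locally_linear0_contract {p : int} {H x} i :
  locally_linear p H 0 x -> (p %| H x - x)%Z ->
  (p ^+ i.+1 %| iter i H (H x) - iter i H x)%Z.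
Proof.
move=> Hx Hxx; elim: i => [|i IH]; first by rewrite expr1.
have zx := locally_linear_iter_fix i Hx Hxx.
rewrite !iterS; set z := iter i H x in zx IH *.
set e := iter i H (H x) - z in IH.
have pe : (p %| e)%Z by apply: dvdz_trans IH; rewrite exprS dvdz_mulr.
have := Hx z e zx pe; rewrite mul0r subr0 /e [z + _]addrC subrK.
by apply: dvdz_trans; rewrite exprS dvdz_mul.
Qed.

(* By induction on i, H^i(x) = x + i (H x - x) modulo p^(j+1); take i = p. *)
Lemma locally_linear1_lift {p : nat} {H x j} :
  locally_linear p H 1 x -> (0 < j)%N -> (p%:Z ^+ j %| H x - x)%Z ->
  (p%:Z ^+ j.+1 %| iter p H x - x)%Z.
Proof.
move=> Hx j_gt0 Dd; set d := H x - x in Dd.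
suff Hi i : (p%:Z ^+ j.+1 %| iter i H x - x - i%:Z * d)%Z.
  rewrite -(subrK (p%:Z * d) (iter p H x - x)) rpredD ?Hi //.
  by rewrite exprS dvdz_mul.
elim: i => [|i IH]; first by rewrite /= subrr mul0r subr0 dvdz0.
set e := iter i H x - x.
have De : (p%:Z ^+ j %| e)%Z.
  rewrite /e -(subrK (i%:Z * d) (iter i H x - x)) rpredD ?dvdz_mull //.
  by apply: dvdz_trans IH; rewrite exprS dvdz_mull.
have pe : (p%:Z %| e)%Z.
  by apply: dvdz_trans De; rewrite -(prednK j_gt0) exprS dvdz_mulr.
have := Hx x e; rewrite subrr dvdz0 mul1r => /(_ isT pe) He.
have -> : iter i.+1 H x - x - i.+1%:Z * d =
    (H (x + e) - H x - e) + (iter i H x - x - i%:Z * d).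
  by rewrite /e /d iterS [x + _]addrC subrK -addn1 PoszD; ring.
by rewrite rpredD // (dvdz_trans _ He) // exprS dvdz_mul.
Qed.

Lemma locally_linear1_iter_expn {p : nat} {G x} k :
  locally_linear p G 1 x -> (p%:Z %| G x - x)%Z ->
  (p%:Z ^+ k.+1 %| iter (p ^ k) G x - x)%Z.
Proof.
move=> Gx Gxx; elim: k => [|k IH]; first by rewrite expr1 expn0.
have := locally_linear_iter (p ^ k) Gx Gxx; rewrite expr1n => Gkx.
by rewrite expnS iterM; apply: locally_linear1_lift.
Qed.

End PadicLifting.

Section IteratePeriods.
Local Open Scope ring_scope.
Context {F : int -> int} (F_congr : forall d a b, (d %| a - b)%Z -> (d %| F a - F b)%Z).

Lemma iter_congr {d a b} i : (d %| a - b)%Z -> (d %| iter i F a - iter i F b)%Z.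
Proof. by move=> ab; elim: i => //= i IH; apply: F_congr. Qed.

Lemma iter_period_shift {d y k k' P} :
  (d %| iter (k + P) F y - iter k F y)%Z -> (k <= k')%N ->
  (d %| iter (k' + P) F y - iter k' F y)%Z.
Proof.
move=> Py kk'; rewrite -(subnK kk') -addnA !(iterD (k' - k)).
exact: iter_congr.
Qed.

Lemma iter_period_mul {d y k P} j :
  (d %| iter (k + P) F y - iter k F y)%Z -> (d %| iter (k + P * j) F y - iter k F y)%Z.
Proof.
move=> Py; elim: j => [|j IH]; first by rewrite muln0 addn0 subrr dvdz0.
rewrite -(subrKA (iter (k + P * j) F y)) rpredD // mulnS addnCA addnC.
exact: iter_period_shift Py (leq_addr _ _).
Qed.

End IteratePeriods.

Section CycleLength.
Context {T : finType} (h : T -> T).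

Lemma cycle_len_eperiod y : is_eperiod h y (cycle_len h y).
Proof. by rewrite /cycle_len; case: ex_minnP => l /asboolP. Qed.

Lemma cycle_len_min {y l} : is_eperiod h y l -> cycle_len h y <= l.
Proof. by move=> yl; rewrite /cycle_len; case: ex_minnP => m _; apply; apply/asboolP. Qed.

Lemma iter_eperiod_shift {y k k' l} :
  iter k h y = iter (k + l) h y -> k <= k' -> iter k' h y = iter (k' + l) h y.
Proof. by move=> E kk'; rewrite -(subnK kk') -addnA !(iterD (k' - k)) E. Qed.

Lemma iter_eperiod_mul {y k k' l} j :
  iter k h y = iter (k + l) h y -> k <= k' -> iter k' h y = iter (k' + l * j) h y.
Proof.
move=> E kk'; elim: j => [|j IH]; first by rewrite muln0 addn0.
rewrite mulnS addnCA addnC -(iter_eperiod_shift E (leq_trans kk' (leq_addr _ _))).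
exact: IH.
Qed.

Lemma cycle_len_dvd y l : is_eperiod h y l -> cycle_len h y %| l.
Proof.
have [c_gt0 [k1 E1]] := cycle_len_eperiod y; set c := cycle_len h y in c_gt0 E1 *.
case=> l_gt0 [k2 E2]; set K := k1 + k2.
have EK : iter K h y = iter (K + l) h y := iter_eperiod_shift E2 (leq_addl _ _).
have Er : iter K h y = iter (K + l %% c) h y.
  have Kk1 : k1 <= K + l %% c by rewrite -addnA leq_addr.
  rewrite EK (iter_eperiod_mul (l %/ c) E1 Kk1) {1}(divn_eq l c).
  congr iter; lia.
case: (posnP (l %% c)) => [r0|r_gt0]; first by rewrite /dvdn r0.
have := cycle_len_min (conj r_gt0 (ex_intro _ K Er)).
by rewrite leqNgt ltn_pmod.
Qed.

Lemma iter_cycle_inj {y k} :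
  iter k h y = iter (k + cycle_len h y) h y ->
  injective (fun i : 'I_(cycle_len h y) => iter (k + i) h y).
Proof.
move=> Ek.
have lt_neq (i j : 'I_(cycle_len h y)) : i < j -> iter (k + i) h y <> iter (k + j) h y.
  move=> ij Eij.
  have Eji : iter (k + i) h y = iter (k + i + (j - i)) h y.
    by rewrite Eij; congr iter; lia.
  have ji_gt0 : 0 < j - i by rewrite subn_gt0.
  have := cycle_len_min (conj ji_gt0 (ex_intro _ (k + i) Eji)).
  by have := ltn_ord j; lia.
move=> i j /= Eij; apply: val_inj.
by case: (ltngtP i j) => // [/lt_neq | /lt_neq]; rewrite Eij.
Qed.

Lemma cycle_len_le_card y : cycle_len h y <= #|T|.
Proof.
have [_ [k Ek]] := cycle_len_eperiod y.
by have := leq_card _ (iter_cycle_inj Ek); rewrite card_ord.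
Qed.

Lemma cycle_len_eq_card y : cycle_len h y = #|T| -> full_cyclic_perm h.
Proof.
have [c_gt0 [k Ek]] := cycle_len_eperiod y; have inj := iter_cycle_inj Ek.
set c := cycle_len h y in c_gt0 Ek inj * => cT.
have onto t : exists i : 'I_c, t = iter (k + i) h y.
  have cardT : #|T| <= #|'I_c| by rewrite card_ord cT.
  by have /codomP[i ->] := inj_card_onto inj cardT t; exists i.
have period t : iter c h t = t.
  have [i ->] := onto t; rewrite -iterD (_ : c + (k + i) = i + (k + c)); last by lia.
  by rewrite iterD -Ek -iterD addnC.
split.
  exists (iter c.-1 h) => t; first by rewrite -iterSr prednK ?period.
  by rewrite -iterS prednK ?period.
move=> x z; have [i ->] := onto x; have [j ->] := onto z; exists (j + (c - i)).
rewrite -iterD (_ : j + (c - i) + (k + i) = j + (k + c)); last by have := ltn_ord i; lia.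
by rewrite iterD -Ek -iterD addnC.
Qed.

End CycleLength.

Section Modular.
Local Open Scope ring_scope.

Lemma red_map_iter (f : {poly int}) (m : nat) (y : 'I_m) k :
  (iter k (red_map f m) y : int) = (iter k (horner f) (y : int) %% m)%Z.
Proof.
have m_gt0 : (0 < m)%N by case: m y => [[]|].
elim: k => [|k IH] /=; first by rewrite modz_small // ltz_nat ltn_ord.
rewrite -modz_nat gez0_abs ?modz_ge0 -?lt0n // modz_mod IH.
by apply/eqP; rewrite eqz_mod_dvd horner_congr // -eqz_mod_dvd modz_mod.
Qed.

Lemma red_map_iter_eq (f : {poly int}) (m : nat) (y : 'I_m) k k' :
  iter k (red_map f m) y = iter k' (red_map f m) y <->
  (m%:Z %| iter k (horner f) (y : int) - iter k' (horner f) (y : int))%Z.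
Proof.
rewrite -eqz_mod_dvd -!red_map_iter; split; first by move=> ->.
by move/eqP => [] /val_inj.
Qed.

Lemma fermat_int {p : nat} {a : int} : prime p -> ~~ (p%:Z %| a)%Z ->
  (p%:Z %| a ^+ p.-1 - 1)%Z.
Proof.
move=> p_pr pNa; have p_gt0 := prime_gt0 p_pr.
have [r rE] : exists r : nat, r%:Z = (a %% p)%Z.
  by exists `|(a %% p)%Z|%N; rewrite gez0_abs // modz_ge0 // -lt0n.
have r_cop : coprime r p.
  have r_lt : (r < p)%N by rewrite -ltz_nat rE ltz_pmod.
  have r_gt0 : (0 < r)%N.
    by rewrite lt0n; apply: contra pNa => /eqP r0; apply/dvdz_mod0P; rewrite -rE r0.
  by rewrite coprime_sym prime_coprime // gtnNdvd.
have Er : (p%:Z %| r%:Z ^+ p.-1 - 1)%Z.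
  have := Euler_exp_totient r_cop; rewrite totient_prime // => Er.
  by rewrite -eqz_mod_dvd -[r%:Z]natz -natrX natz modz_nat Er modz_nat.
have Ear : (p%:Z %| a - r%:Z)%Z by rewrite rE -eqz_mod_dvd modz_mod.
rewrite -(subrKA (r%:Z ^+ p.-1)) rpredD //.
by apply: dvdz_trans Ear _; rewrite subrXX dvdz_mulr.
Qed.

Lemma dvdz_exp_squarefree (b n : nat) (d : int) : (0 < b)%N -> squarefree b ->
  (forall p, prime p -> (p %| b)%N -> (p%:Z ^+ n.+1 %| d)%Z) -> (b%:Z ^+ n.+1 %| d)%Z.
Proof.
move=> b_gt0 b_sqf pd; rewrite dvdzE abszX absz_nat.
have bn_gt0 : (0 < b ^ n.+1)%N by rewrite expn_gt0 b_gt0.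
apply/(dvdn_partP _ bn_gt0) => p.
rewrite pi_of_exp // /pi_of inE mem_primes => /and3P [p_pr _ pb].
have := pd p p_pr pb; rewrite dvdzE abszX absz_nat => pnd.
rewrite p_part lognX (_ : logn p b = 1) ?muln1 //.
have := b_sqf p p_pr; rewrite pfactor_dvdn // -ltnNge ltnS => le1.
by apply/eqP; rewrite eqn_leq le1 logn_gt0 mem_primes p_pr b_gt0.
Qed.

End Modular.

Lemma dvdn_exp_of_primes (X B n : nat) : 0 < X -> X <= n ->
  (forall q, prime q -> q %| X -> q %| B) -> X %| B ^ n.
Proof.
move=> X_gt0 Xn XB; apply/(dvdn_partP _ X_gt0) => q.
rewrite mem_primes => /and3P [q_pr _ qX]; rewrite p_part.
apply: dvdn_trans (dvdn_exp2l q _) (dvdn_exp2r n (XB q q_pr qX)).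
apply: leq_trans Xn; apply: leq_trans (ltnW (ltn_expl _ (prime_gt1 q_pr))) _.
exact: dvdn_leq X_gt0 (pfactor_dvdnn q X).
Qed.

Lemma exists_bound_seq (T : eqType) (P : T -> nat -> Prop) (s : seq T) :
  (forall x k k', P x k -> k <= k' -> P x k') ->
  (forall x, x \in s -> exists k, P x k) -> exists k, forall x, x \in s -> P x k.
Proof.
move=> P_mono; elim: s => [|a s IH] Ps; first by exists 0.
have [ka Pa] := Ps a (mem_head _ _).
have [ks Pks] : exists k, forall x, x \in s -> P x k.
  by apply: IH => x xs; apply: Ps; rewrite inE xs orbT.
exists (ka + ks) => x; rewrite inE => /predU1P [->|xs].
  exact: P_mono Pa (leq_addr _ _).
exact: P_mono (Pks x xs) (leq_addl _ _).
Qed.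

Lemma prime_period_dvd_exp {b n p L : nat} :
  0 < b -> valid b -> prime p -> p %| b -> 0 < L < p ->
  (forall q, prime q -> q %| L -> q %| b) -> b * b <= n ->
  p ^ n * (p.-1 * L) %| b ^ n.
Proof.
move=> b_gt0 b_valid p_pr pb /andP[L_gt0 Lp] Lb bbn.
have p_le_b := dvdn_leq b_gt0 pb.
have pred_p_gt0 : 0 < p.-1 by rewrite -subn1 subn_gt0 prime_gt1.
have X_gt0 : 0 < p.-1 * L by rewrite muln_gt0 pred_p_gt0.
have Xn : p.-1 * L <= n.
  apply: leq_trans bbn; apply: leq_mul; last exact: leq_trans (ltnW Lp) p_le_b.
  exact: leq_trans (leq_pred p) p_le_b.
have Xb q : prime q -> q %| p.-1 * L -> q %| b.
  by move=> q_pr; rewrite Euclid_dvdM // => /orP[/(b_valid p q p_pr q_pr pb) | /Lb]; apply.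
have Xp : coprime (p.-1 * L) p.
  rewrite coprimeMl !(coprime_sym _ p) !prime_coprime // !gtnNdvd //.
  by rewrite prednK // prime_gt0.
rewrite Gauss_dvd; last by rewrite coprimeXl // coprime_sym.
by rewrite dvdn_exp2r // dvdn_exp_of_primes.
Qed.

Section PrimePowerPeriods.
Local Open Scope ring_scope.
Variable f : {poly int}.

Lemma red_prime_cycle (p y : nat) : tower_stable f -> prime p ->
  exists k L, [/\ (0 < L < p)%N, (L %| lambda_f f p)%N
                & (p%:Z %| iter (k + L) (horner f) y - iter k (horner f) y)%Z].
Proof.
move=> f_ts p_pr; have p_gt0 := prime_gt0 p_pr.
pose y0 : 'I_p := Ordinal (ltn_pmod y p_gt0).
have [L_gt0 [k Ek]] := cycle_len_eperiod (red_map f p) y0.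
set L := cycle_len (red_map f p) y0 in L_gt0 Ek.
have Lp : (L < p)%N.
  rewrite ltn_neqAle -{2}(card_ord p) cycle_len_le_card andbT.
  apply/eqP => Lp; apply: (f_ts p p_pr); apply: (cycle_len_eq_card _ y0).
  by rewrite card_ord.
have /red_map_iter_eq Dy0 := Ek.
have yy0 : (p%:Z %| y%:Z - y0%:Z)%Z by rewrite /= -modz_nat -eqz_mod_dvd modz_mod.
have cong j := iter_congr (@horner_congr f) j yy0.
exists k, L; split; [by rewrite L_gt0 | exact: (biglcmn_sup y0) |].
have -> : iter (k + L) (horner f) y - iter k (horner f) y =
    (iter (k + L) (horner f) y - iter (k + L) (horner f) y0)
    - (iter k (horner f) y0 - iter (k + L) (horner f) y0)
    - (iter k (horner f) y - iter k (horner f) y0) by ring.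
exact: rpredB (rpredB (cong _) Dy0) (cong _).
Qed.

Lemma padic_period (p L n : nat) (x : int) : prime p ->
  (p%:Z %| iter L (horner f) x - x)%Z ->
  exists k P, (P %| p ^ n * (p.-1 * L))%N /\
    (p%:Z ^+ n.+1 %| iter (k + P) (horner f) x - iter k (horner f) x)%Z.
Proof.
move=> p_pr Gx; have [g Eg] := iter_horner f L.
have Ga := horner_locally_linear (p := p%:Z) g x; rewrite -Eg in Ga.
have [pa | pNa] := boolP (p%:Z %| g^`().[x])%Z.
  have G0 : locally_linear p (iter L (horner f)) 0 x.
    by apply: locally_linear_slope Ga _; rewrite subr0.
  have := locally_linear0_contract n G0 Gx; rewrite -!iterM -iterD => C.
  by exists (n * L)%N, L; rewrite !dvdn_mull.
have H1 : locally_linear p (iter p.-1 (iter L (horner f))) 1 x.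
  exact: locally_linear_slope (locally_linear_iter p.-1 Ga Gx) (fermat_int p_pr pNa).
have := locally_linear1_iter_expn n H1 (locally_linear_iter_fix p.-1 Ga Gx).
rewrite -!iterM -mulnA => C.
by exists 0%N, (p ^ n * (p.-1 * L))%N.
Qed.

Lemma prime_power_period (b n p y : nat) :
  tower_stable f -> (0 < b)%N -> f_valid f b -> prime p -> (p %| b)%N -> (b * b <= n)%N ->
  exists k, (p%:Z ^+ n.+1 %| iter (k + b ^ n) (horner f) y - iter k (horner f) y)%Z.
Proof.
move=> f_ts b_gt0 [_ [b_valid b_fvalid]] p_pr pb bbn.
have [k0 [L [L_range Llam Ek0]]] := red_prime_cycle p y f_ts p_pr.
have Gx : (p%:Z %| iter L (horner f) (iter k0 (horner f) y) - iter k0 (horner f) y)%Z.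
  by rewrite -iterD addnC.
have [k [P [Pdvd EP]]] := padic_period p L n _ p_pr Gx.
have Pb : (P %| b ^ n)%N.
  apply: dvdn_trans Pdvd (prime_period_dvd_exp b_gt0 b_valid p_pr pb L_range _ bbn).
  by move=> q q_pr qL; apply: b_fvalid p_pr q_pr pb (dvdn_trans qL Llam).
exists (k + k0)%N; rewrite -(divnK Pb) mulnC; apply: (iter_period_mul (@horner_congr f)).
by rewrite -!iterD in EP; rewrite addnAC.
Qed.

End PrimePowerPeriods.

Theorem proposition4p5 (f : {poly int}) (b : nat) :
  tower_stable f -> 0 < b -> f_valid f b ->
  exists N : nat, forall n : nat, N <= n -> 0 < n ->
    lambda_f f (b ^ n.+1) %| b ^ n.
Proof.
move=> f_ts b_gt0 b_fvalid; exists (b * b) => n bbn _.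
apply/dvdn_biglcmP => y _; apply: cycle_len_dvd; split; first by rewrite expn_gt0 b_gt0.
pose period_from p k :=
  (p%:Z ^+ n.+1 %| (iter (k + b ^ n) (horner f) y - iter k (horner f) y)%R)%Z.
have [k Pk] : exists k, forall p, p \in primes b -> period_from p k.
  apply: exists_bound_seq => [p k k' | p]; first exact: (iter_period_shift (@horner_congr f)).
  by rewrite mem_primes => /and3P[p_pr _ pb]; apply: prime_power_period.
exists k; apply/red_map_iter_eq; rewrite -opprB rpredN -[Posz (b ^ n.+1)]natz natrX natz.
apply: (dvdz_exp_squarefree b n _ b_gt0 (proj1 b_fvalid)) => p p_pr pb.
by apply: Pk; rewrite mem_primes p_pr b_gt0.
Qed.
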